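(* Let $(\mathcal{S},\mathcal{R})$ be an $r$-homogeneous positive presentation. Then $(\mathcal{S},\mathcal{R})$ is $r$-complete if and only if any one of the following three conditions holds, and these three conditions are equivalent: (i) the strong $r$-cube condition holds at $u,v,w$ for all $u,v,w\in\mathcal{S}^*$; (ii) the strong $r$-cube condition holds at $s,t,r$ for all letters $s,t,r\in\mathcal{S}$; (iii) the $r$-cube condition holds at $s,t,r$ for all letters $s,t,r\in\mathcal{S}$.
   Context: A positive presentation is a pair $(\mathcal{S},\mathcal{R})$ where $\mathcal{S}$ is a nonempty set of letters and $\mathcal{R}$ is a family of relations $u=v$, i.e. unordered pairs $\{u,v\}$ of nonempty words in the free monoid $\mathcal{S}^*$. $\varepsilon$ denotes the empty word; $\equiv$ is the smallest congruence on $\mathcal{S}^*$ containing all pairs of $\mathcal{R}$. Let $\mathcal{S}^{-1}=\{s^{-1}:s\in\mathcal{S}\}$ be a disjoint copy of $\mathcal{S}$; for a word $u\in\mathcal{S}^*$, $u^{-1}$ is the word on $\mathcal{S}^{-1}$ obtained by reversing the order of the letters of $u$ and replacing each $s$ by $s^{-1}$. Right reversing: for words $\mathbf{w},\mathbf{w}'$ on $\mathcal{S}\cup\mathcal{S}^{-1}$ we write $\mathbf{w}\curvearrowright_r\mathbf{w}'$ if $\mathbf{w}'$ is obtained from $\mathbf{w}$ by a finite (possibly empty) sequence of steps, each of which either deletes a subword $u^{-1}u$ with $u\in\mathcal{S}^*$ nonempty, or replaces a subword $u^{-1}v$ with $u,v\in\mathcal{S}^*$ nonempty by a word $v'u'^{-1}$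 with $u',v'\in\mathcal{S}^*$ such that $uv'=vu'$ is a relation of $\mathcal{R}$. $(\mathcal{S},\mathcal{R})$ is $r$-complete if for all $u,v,u',v'\in\mathcal{S}^*$ with $uv'\equiv vu'$ there exist $u'',v'',w\in\mathcal{S}^*$ with $u^{-1}v\curvearrowright_r v''u''^{-1}$, $u'\equiv u''w$ and $v'\equiv v''w$. For $u,v,w\in\mathcal{S}^*$: the $r$-cube condition holds at $u,v,w$ if whenever $u^{-1}ww^{-1}v\curvearrowright_r v'u'^{-1}$ with $u',v'\in\mathcal{S}^*$, there exist $u'',v'',w''\in\mathcal{S}^*$ with $u^{-1}v\curvearrowright_r v''u''^{-1}$, $u'\equiv u''w''$ and $v'\equiv v''w''$; the strong $r$-cube condition holds at $u,v,w$ if whenever $u^{-1}ww^{-1}v\curvearrowright_r v'u'^{-1}$ with $u',v'\in\mathcal{S}^*$, we have $(uv')^{-1}(vu')\curvearrowright_r\varepsilon$. $(\mathcal{S},\mathcal{R})$ is $r$-homogeneous if there is a map $\lambda$ from $\mathcal{S}^*$ to the ordinals such that $\lambda(su)>\lambda(u)$ for all $s\in\mathcal{S}$, $u\in\mathcal{S}^*$, and $\lambda(u)=\lambda(v)$ whenever $u\equiv v$. *)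

From Stdlib Require Import List.
Import ListNotations.
Set Implicit Arguments.

Section Pres.
Variable S : Type.

(* A relation family R is a predicate on pairs of words; the pair {u,v}
   is a relation of R iff  R u v \/ R v u  (unordered pairs). *)
Definition is_rel (R : list S -> list S -> Prop) (u v : list S) : Prop :=
  R u v \/ R v u.

Definition positive_presentation (R : list S -> list S -> Prop) : Prop :=
  forall u v, R u v -> u <> [] /\ v <> [].

Inductive cong (R : list S -> list S -> Prop) : list S -> list S -> Prop :=
| cong_rel : forall a b u v, R u v -> cong R (a ++ u ++ b) (a ++ v ++ b)
| cong_refl : forall u, cong R u u
| cong_sym : forall u v, cong R u v -> cong R v u
| cong_trans : forall u v w, cong R u v -> cong R v w -> cong R u w.

(* Signed letters: words on S ∪ S^{-1}. *)
Inductive sletter : Type := Pos (s : S) | Neg (s : S).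

Definition pos (u : list S) : list sletter := map Pos u.
Definition inv (u : list S) : list sletter := rev (map Neg u).

Inductive rev_step (R : list S -> list S -> Prop) : list sletter -> list sletter -> Prop :=
| rev_del : forall a b u, u <> [] ->
    rev_step R (a ++ inv u ++ pos u ++ b) (a ++ b)
| rev_rel : forall a b u v u' v', u <> [] -> v <> [] ->
    is_rel R (u ++ v') (v ++ u') ->
    rev_step R (a ++ inv u ++ pos v ++ b) (a ++ pos v' ++ inv u' ++ b).

Inductive rev_star (R : list S -> list S -> Prop) : list sletter -> list sletter -> Prop :=
| rev_refl : forall w, rev_star R w w
| rev_cons : forall w1 w2 w3, rev_step R w1 w2 -> rev_star R w2 w3 -> rev_star R w1 w3.

Definition r_complete (R : list S -> list S -> Prop) : Prop :=
  forall u v u' v', cong R (u ++ v') (v ++ u') ->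
    exists u'' v'' w, rev_star R (inv u ++ pos v) (pos v'' ++ inv u'') /\
      cong R u' (u'' ++ w) /\ cong R v' (v'' ++ w).

Definition r_cube (R : list S -> list S -> Prop) (u v w : list S) : Prop :=
  forall u' v', rev_star R (inv u ++ pos w ++ inv w ++ pos v) (pos v' ++ inv u') ->
    exists u'' v'' w'', rev_star R (inv u ++ pos v) (pos v'' ++ inv u'') /\
      cong R u' (u'' ++ w'') /\ cong R v' (v'' ++ w'').

Definition strong_r_cube (R : list S -> list S -> Prop) (u v w : list S) : Prop :=
  forall u' v', rev_star R (inv u ++ pos w ++ inv w ++ pos v) (pos v' ++ inv u') ->
    rev_star R (inv (u ++ v') ++ pos (v ++ u')) [].

(* r-homogeneous: a map lambda into the ordinals, i.e. into a well-ordered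
   type (strict, total, well-founded order), with lambda(su) > lambda(u) and
   lambda constant on ≡-classes. *)
Definition r_homogeneous (R : list S -> list S -> Prop) : Prop :=
  exists (O : Type) (lt : O -> O -> Prop) (lambda : list S -> O),
    (forall x y z, lt x y -> lt y z -> lt x z) /\
    (forall x y, lt x y \/ x = y \/ lt y x) /\
    well_founded lt /\
    (forall s u, lt (lambda u) (lambda (s :: u))) /\
    (forall u v, cong R u v -> lambda u = lambda v).

End Pres.

From Stdlib Require Import List Setoid Morphisms Wellfounded.
Import ListNotations.

(* Right reversing is first recast as reversing grids, which can be split
   and pasted along any factorisation of their sides.  Write u ~ v when
   u^-1 v reverses to the empty word.  Completeness then says exactly that ≡
   is contained in ~, and it yields the strong cube condition because a grid
   with empty output is a proof of equivalence.  Conversely, ~ is reflexive,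
   symmetric, compatible with products and contains R, so it contains ≡ as
   soon as it is transitive.  Transitivity is proved by well-founded
   induction on lambda: for s x ~ t y ~ r z, splitting both grids after their
   first letters leaves a three-letter cube at (s, r, t), which the cube
   condition closes; all the remaining comparisons are between words of
   smaller lambda, where ~ already contains ≡. *)

Ltac app_norm := repeat (rewrite <- app_assoc || rewrite app_nil_l || rewrite app_nil_r).

Section Reversing.
Context {S : Type} {R : list S -> list S -> Prop}.

Local Notation "x ≡ y" := (cong R x y) (at level 70, no associativity).

Lemma pos_app (u v : list S) : pos (u ++ v) = pos u ++ pos v.
Proof. apply map_app. Qed.

Lemma inv_app (u v : list S) : inv (u ++ v) = inv v ++ inv u.
Proof. unfold inv. rewrite map_app, rev_app_distr. reflexivity. Qed.

Lemma rev_star_trans W1 W2 W3 : rev_star R W1 W2 -> rev_star R W2 W3 -> rev_star R W1 W3.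
Proof. induction 1; [auto | intro; econstructor; eauto]. Qed.

Lemma rev_step_ctx a b W W' : rev_step R W W' -> rev_step R (a ++ W ++ b) (a ++ W' ++ b).
Proof.
  destruct 1 as [a0 b0 u Hu | a0 b0 u v u' v' Hu Hv Huv].
  - pose proof (rev_del R (a ++ a0) (b0 ++ b) Hu) as H.
    app_norm. repeat rewrite <- app_assoc in H. exact H.
  - pose proof (rev_rel (a ++ a0) (b0 ++ b) u' v' Hu Hv Huv) as H.
    app_norm. repeat rewrite <- app_assoc in H. exact H.
Qed.

Lemma rev_star_ctx a b [W W' X Y] :
  rev_star R W W' -> X = a ++ W ++ b -> Y = a ++ W' ++ b -> rev_star R X Y.
Proof.
  intro H; revert X Y; induction H; intros X Y -> ->.
  - constructor.
  - econstructor; [apply rev_step_ctx; eassumption | auto].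
Qed.

#[local] Instance cong_equivalence : Equivalence (cong R).
Proof. split; [exact (cong_refl R) | exact (@cong_sym S R) | exact (@cong_trans S R)]. Qed.

Lemma cong_ctx a b [x y] : x ≡ y -> a ++ x ++ b ≡ a ++ y ++ b.
Proof.
  induction 1 as [a0 b0 u v Huv | u | u v _ IH | u v w _ IH1 _ IH2].
  - pose proof (cong_rel R (a ++ a0) (b0 ++ b) u v Huv) as H.
    app_norm. repeat rewrite <- app_assoc in H. exact H.
  - reflexivity.
  - symmetry; exact IH.
  - transitivity (a ++ v ++ b); assumption.
Qed.

#[local] Instance app_cong_proper : Proper (cong R ==> cong R ==> cong R) (@app S).
Proof.
  intros x x' Hx y y' Hy. transitivity (x' ++ y).
  - exact (cong_ctx [] y Hx).
  - pose proof (cong_ctx x' [] Hy) as H. rewrite !app_nil_r in H. exact H.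
Qed.

Lemma cong_of_is_rel u v : is_rel R u v -> u ≡ v.
Proof.
  assert (Huv : forall u v, R u v -> u ≡ v).
  { intros x y H. pose proof (cong_rel R [] [] x y H) as H'. rewrite !app_nil_r in H'. exact H'. }
  intros [H | H]; [| symmetry]; auto.
Qed.

Lemma cong_nil_iff [x y] : positive_presentation R -> x ≡ y -> (x = [] <-> y = []).
Proof.
  intros Hpos; induction 1 as [a b u v Huv | | |]; try tauto.
  destruct (Hpos _ _ Huv) as [Hu Hv].
  split; intro H; apply app_eq_nil in H as [_ H]; apply app_eq_nil in H as [H _]; contradiction.
Qed.

(* [reverses u v v' u'] : the word u^-1 v reverses to v' u'^-1, witnessed by
   a reversing grid obtained by pasting elementary squares horizontally and
   vertically. *)
Inductive reverses : list S -> list S -> list S -> list S -> Prop :=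
| reverses_nil_l v : reverses [] v v []
| reverses_nil_r u : reverses u [] [] u
| reverses_diag u : reverses u u [] []
| reverses_rel u v v' u' : u <> [] -> v <> [] -> is_rel R (u ++ v') (v ++ u') ->
    reverses u v v' u'
| reverses_app_l u1 u2 v v1 v' u1' u2' :
    reverses u1 v v1 u1' -> reverses u2 v1 v' u2' -> reverses (u1 ++ u2) v v' (u1' ++ u2')
| reverses_app_r u v1 v2 v1' v2' m u' :
    reverses u v1 v1' m -> reverses m v2 v2' u' -> reverses u (v1 ++ v2) (v1' ++ v2') u'.

Arguments reverses_rel [u v] v' u'.
Arguments reverses_app_l [u1 u2 v v1 v' u1' u2'].
Arguments reverses_app_r [u v1 v2 v1' v2' m u'].

Lemma reverses_sym [u v v' u'] : reverses u v v' u' -> reverses v u u' v'.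
Proof.
  induction 1; try (econstructor; eassumption); try constructor; auto.
  unfold is_rel in *; tauto.
Qed.

Lemma reverses_nil_l_uniq [v v' u'] : reverses [] v v' u' -> v' = v /\ u' = [].
Proof.
  intro H; remember [] as u eqn:Hu in H; induction H; subst; try discriminate; auto.
  - contradiction.
  - apply app_eq_nil in Hu as [-> ->].
    destruct (IHreverses1 eq_refl) as [-> ->], (IHreverses2 eq_refl) as [-> ->]; auto.
  - destruct (IHreverses1 eq_refl) as [-> ->], (IHreverses2 eq_refl) as [-> ->]; auto.
Qed.

Lemma reverses_nil_r_uniq [u v' u'] : reverses u [] v' u' -> v' = [] /\ u' = u.
Proof. intro H; apply reverses_sym, reverses_nil_l_uniq in H; tauto. Qed.

Lemma reverses_prefix u v : reverses u (u ++ v) v [].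
Proof. exact (reverses_app_r (reverses_diag u) (reverses_nil_l v)). Qed.

Lemma reverses_split_l [u1 u2 v v' u'] :
  reverses (u1 ++ u2) v v' u' ->
  exists v1 a b, reverses u1 v v1 a /\ reverses u2 v1 v' b /\ u' = a ++ b.
Proof.
  intro H; remember (u1 ++ u2) as U eqn:HU; revert u1 u2 HU.
  induction H as [v | u | u | u v v' u' Hu Hv Huv | u1 u2 v v1 v' u1' u2' H1 IH1 H2 IH2
                 | u v1 v2 v1' v2' m u' H1 IH1 H2 IH2]; intros x1 x2 HU.
  - symmetry in HU; apply app_eq_nil in HU as [-> ->].
    exists v, [], []; repeat split; constructor.
  - subst. exists [], x1, x2; repeat split; constructor.
  - subst. exists x2, [], []; repeat split; [apply reverses_prefix | constructor].
  - destruct x1 as [|x x1].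
    + subst. exists v, [], u'; repeat split; [constructor | apply reverses_rel; auto].
    + exists (x2 ++ v'), u', []; repeat split.
      * apply reverses_rel; [discriminate | auto |]. subst. rewrite <- app_assoc in Huv. exact Huv.
      * apply reverses_prefix.
      * symmetry; apply app_nil_r.
  - destruct (app_eq_app _ _ _ _ HU) as [l [[E1 E2] | [E1 E2]]].
    + destruct (IH1 _ _ E1) as (c & a & b & Ha & Hb & ->).
      exists c, a, (b ++ u2'); repeat split; [auto | | symmetry; apply app_assoc].
      subst; eapply reverses_app_l; eauto.
    + destruct (IH2 _ _ E2) as (c & a & b & Ha & Hb & ->).
      exists c, (u1' ++ a), b; repeat split; [| auto | apply app_assoc].
      subst; eapply reverses_app_l; eauto.
  - destruct (IH1 _ _ HU) as (c & p & q & Hp & Hq & ->).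
    destruct (IH2 _ _ eq_refl) as (d & p' & q' & Hp' & Hq' & ->).
    exists (c ++ d), p', q'; repeat split; auto; eapply reverses_app_r; eauto.
Qed.

Lemma reverses_split_r [u v1 v2 v' u'] :
  reverses u (v1 ++ v2) v' u' ->
  exists m a b, reverses u v1 a m /\ reverses m v2 b u' /\ v' = a ++ b.
Proof.
  intro H; apply reverses_sym, reverses_split_l in H as (m & a & b & Ha & Hb & ->).
  exists m, a, b; split; [|split]; auto; apply reverses_sym; auto.
Qed.

Lemma reverses_cong [u v v' u'] : reverses u v v' u' -> u ++ v' ≡ v ++ u'.
Proof.
  induction 1 as [| | | u v v' u' _ _ Huv | u1 u2 v v1 v' u1' u2' _ IH1 _ IH2
                 | u v1 v2 v1' v2' m u' _ IH1 _ IH2];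
    rewrite ?app_nil_r; try reflexivity.
  - apply cong_of_is_rel, Huv.
  - rewrite <- app_assoc, IH2, app_assoc, IH1, app_assoc. reflexivity.
  - rewrite app_assoc, IH1, <- app_assoc, IH2, app_assoc. reflexivity.
Qed.

Lemma reverses_rev_star [u v v' u'] :
  reverses u v v' u' -> rev_star R (inv u ++ pos v) (pos v' ++ inv u').
Proof.
  induction 1 as [v | u | u | u v v' u' Hu Hv Huv | u1 u2 v v1 v' u1' u2' _ IH1 _ IH2
                 | u v1 v2 v1' v2' m u' _ IH1 _ IH2].
  - rewrite app_nil_r. constructor.
  - rewrite app_nil_r. constructor.
  - destruct u as [|s u]; [constructor |].
    apply (rev_cons (w2 := [])); [| constructor].
    pose proof (rev_del R [] [] (u := s :: u) ltac:(discriminate)) as H.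
    rewrite app_nil_r in H. exact H.
  - apply (rev_cons (w2 := pos v' ++ inv u')); [| constructor].
    pose proof (rev_rel [] [] u' v' Hu Hv Huv) as H.
    rewrite !app_nil_r in H. exact H.
  - rewrite !inv_app. eapply rev_star_trans.
    + apply (rev_star_ctx (inv u2) [] IH1); app_norm; reflexivity.
    + apply (rev_star_ctx [] (inv u1') IH2); app_norm; reflexivity.
  - rewrite !pos_app. eapply rev_star_trans.
    + apply (rev_star_ctx [] (pos v2) IH1); app_norm; reflexivity.
    + apply (rev_star_ctx (pos v1') [] IH2); app_norm; reflexivity.
Qed.

(* [reverses_word W v u] : processing the signed word W from right to left,
   each negative letter is reversed by a grid against the positive word
   accumulated so far, and the outcome is v u^-1.  Reversing steps anywhere
   in W preserve this relation backwards, which is how arbitrary reversing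
   sequences are turned into grids. *)
Inductive reverses_word : list (sletter S) -> list S -> list S -> Prop :=
| reverses_word_nil : reverses_word [] [] []
| reverses_word_pos s W v u : reverses_word W v u -> reverses_word (Pos s :: W) (s :: v) u
| reverses_word_neg s W v1 u1 v' u2 :
    reverses_word W v1 u1 -> reverses [s] v1 v' u2 ->
    reverses_word (Neg s :: W) v' (u1 ++ u2).

Arguments reverses_word_pos s [W v u].
Arguments reverses_word_neg s [W] v1 [u1 v' u2].

Lemma reverses_word_app [A B v1 u1 v2 u2 v3 u3] :
  reverses_word B v1 u1 -> reverses_word A v2 u2 -> reverses u2 v1 v3 u3 ->
  reverses_word (A ++ B) (v2 ++ v3) (u1 ++ u3).
Proof.
  intros HB HA; revert v3 u3.
  induction HA as [| s A v2 u2 _ IH | s A w1 x1 v2 x2 _ IH Hs]; intros v3 u3 H; simpl.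
  - destruct (reverses_nil_l_uniq H) as [-> ->]. rewrite app_nil_r. exact HB.
  - constructor. apply IH, H.
  - apply reverses_split_l in H as (c & d & e & Hd & He & ->).
    rewrite app_assoc. apply reverses_word_neg with (w1 ++ c).
    + apply IH, Hd.
    + eapply reverses_app_r; eassumption.
Qed.

Lemma reverses_word_app_inv [A B v u] :
  reverses_word (A ++ B) v u ->
  exists v1 u1 v2 u2 v3 u3, reverses_word B v1 u1 /\ reverses_word A v2 u2 /\
    reverses u2 v1 v3 u3 /\ v = v2 ++ v3 /\ u = u1 ++ u3.
Proof.
  revert v u; induction A as [|[s|s] A IH]; simpl; intros v u H.
  - exists v, u, [], [], v, []; repeat split; try constructor; auto.
    symmetry; apply app_nil_r.
  - inversion H as [| ? ? v0 ? HW |]; subst.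
    destruct (IH _ _ HW) as (v1 & u1 & v2 & u2 & v3 & u3 & HB & HA & H3 & -> & ->).
    exists v1, u1, (s :: v2), u2, v3, u3; repeat split; auto; constructor; auto.
  - inversion H as [| | ? ? w1 x1 ? x2 HW Hs]; subst.
    destruct (IH _ _ HW) as (v1 & u1 & v2 & u2 & v3 & u3 & HB & HA & H3 & -> & ->).
    apply reverses_split_r in Hs as (m & a & b & Ha & Hb & ->).
    exists v1, u1, a, (u2 ++ m), b, (u3 ++ x2); repeat split; auto.
    + econstructor; eassumption.
    + eapply reverses_app_l; eassumption.
    + symmetry; apply app_assoc.
Qed.

Lemma reverses_word_pos_iff v a b : reverses_word (pos v) a b <-> a = v /\ b = [].
Proof.
  split.
  - revert a b; induction v as [|s v IH]; intros a b H;
      inversion H as [| ? ? v0 ? HW |]; subst; auto.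
    destruct (IH _ _ HW) as [-> ->]; auto.
  - intros [-> ->]; induction v; constructor; assumption.
Qed.

Lemma reverses_word_inv_iff u a b : reverses_word (inv u) a b <-> a = [] /\ b = u.
Proof.
  split.
  - revert a b; induction u as [|s u IH]; intros a b H.
    + inversion H; auto.
    + change (inv (s :: u)) with (inv u ++ [Neg s]) in H.
      apply reverses_word_app_inv in H as (v1 & u1 & v2 & u2 & v3 & u3 & HB & HA & H3 & -> & ->).
      inversion HB as [| | ? ? w1 x1 ? x2 HW Hs]; subst. inversion HW; subst.
      destruct (reverses_nil_r_uniq Hs) as [-> ->], (IH _ _ HA) as [-> ->],
        (reverses_nil_r_uniq H3) as [-> ->]; auto.
  - intros [-> ->]; induction u as [|s u IH]; [constructor |].
    change (inv (s :: u)) with (inv u ++ [Neg s]).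
    apply (reverses_word_app (reverses_word_neg s [] reverses_word_nil (reverses_nil_r [s])) IH).
    apply reverses_nil_r.
Qed.

Lemma reverses_word_pos_inv_iff v u a b :
  reverses_word (pos v ++ inv u) a b <-> a = v /\ b = u.
Proof.
  split.
  - intro H.
    apply reverses_word_app_inv in H as (v1 & u1 & v2 & u2 & v3 & u3 & HB & HA & H3 & -> & ->).
    apply reverses_word_inv_iff in HB as [-> ->]; apply reverses_word_pos_iff in HA as [-> ->].
    destruct (reverses_nil_l_uniq H3) as [-> ->]. rewrite !app_nil_r; auto.
  - intros [-> ->]. rewrite <- (app_nil_r v) at 2. rewrite <- (app_nil_r u) at 2.
    apply reverses_word_app with (v1 := []) (u2 := []);
      [apply reverses_word_inv_iff | apply reverses_word_pos_iff | constructor]; auto.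
Qed.

Lemma reverses_word_inv_pos_iff u v a b :
  reverses_word (inv u ++ pos v) a b <-> reverses u v a b.
Proof.
  split.
  - intro H.
    apply reverses_word_app_inv in H as (v1 & u1 & v2 & u2 & v3 & u3 & HB & HA & H3 & -> & ->).
    apply reverses_word_pos_iff in HB as [-> ->]; apply reverses_word_inv_iff in HA as [-> ->].
    exact H3.
  - intro H; change (reverses_word (inv u ++ pos v) ([] ++ a) ([] ++ b)).
    apply reverses_word_app with (v1 := v) (u2 := u); auto;
      [apply reverses_word_pos_iff | apply reverses_word_inv_iff]; auto.
Qed.

Lemma reverses_word_frame a b M M' p q :
  (forall p q, reverses_word M' p q -> reverses_word M p q) ->
  reverses_word (a ++ M' ++ b) p q -> reverses_word (a ++ M ++ b) p q.
Proof.
  intros HM H.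
  apply reverses_word_app_inv in H as (v1 & u1 & v2 & u2 & v3 & u3 & Hb & Ha & H3 & -> & ->).
  apply reverses_word_app_inv in Hb as (w1 & x1 & w2 & x2 & w3 & x3 & Hb & HM' & H3' & -> & ->).
  exact (reverses_word_app (reverses_word_app Hb (HM _ _ HM') H3') Ha H3).
Qed.

Lemma rev_step_reverses_word W W' p q :
  rev_step R W W' -> reverses_word W' p q -> reverses_word W p q.
Proof.
  destruct 1 as [a b u Hu | a b u v u' v' Hu Hv Huv]; rewrite (app_assoc (inv u)).
  - apply (reverses_word_frame a b (inv u ++ pos u) []). intros p' q' H.
    inversion H; subst. apply reverses_word_inv_pos_iff, reverses_diag.
  - rewrite (app_assoc (pos v')). apply reverses_word_frame. intros p' q' H.
    apply reverses_word_pos_inv_iff in H as [-> ->].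
    apply reverses_word_inv_pos_iff, reverses_rel; assumption.
Qed.

Lemma rev_star_iff_reverses_word W v u :
  rev_star R W (pos v ++ inv u) <-> reverses_word W v u.
Proof.
  split.
  - remember (pos v ++ inv u) as W' eqn:HW'; induction 1; subst.
    + apply reverses_word_pos_inv_iff; auto.
    + eapply rev_step_reverses_word; eauto.
  - induction 1 as [| s W v u _ IH | s W v1 u1 v' u2 _ IH Hs].
    + constructor.
    + apply (rev_star_ctx [Pos s] [] IH); rewrite app_nil_r; reflexivity.
    + eapply rev_star_trans.
      * apply (rev_star_ctx [Neg s] [] IH); rewrite app_nil_r; reflexivity.
      * apply (rev_star_ctx [] (inv u1) (reverses_rev_star Hs));
          rewrite ?inv_app; app_norm; reflexivity.
Qed.

Lemma reverses_iff_rev_star u v v' u' :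
  reverses u v v' u' <-> rev_star R (inv u ++ pos v) (pos v' ++ inv u').
Proof. rewrite rev_star_iff_reverses_word, reverses_word_inv_pos_iff. reflexivity. Qed.

Lemma rev_star_cube_iff u v w v' u' :
  rev_star R (inv u ++ pos w ++ inv w ++ pos v) (pos v' ++ inv u') <->
  exists v1 w1 w2 u2 v3 u3, reverses w v v1 w1 /\ reverses u w w2 u2 /\
    reverses u2 v1 v3 u3 /\ v' = w2 ++ v3 /\ u' = w1 ++ u3.
Proof.
  rewrite rev_star_iff_reverses_word, (app_assoc (inv u)). split.
  - intro H.
    apply reverses_word_app_inv in H as (v1 & w1 & w2 & u2 & v3 & u3 & H1 & H2 & H3 & -> & ->).
    apply reverses_word_inv_pos_iff in H1, H2.
    exists v1, w1, w2, u2, v3, u3; auto.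
  - intros (v1 & w1 & w2 & u2 & v3 & u3 & H1 & H2 & H3 & -> & ->).
    apply reverses_word_inv_pos_iff in H1, H2.
    exact (reverses_word_app H1 H2 H3).
Qed.

Definition rev_eq x y := reverses x y [] [].

Lemma rev_eq_iff_rev_star x y : rev_eq x y <-> rev_star R (inv x ++ pos y) [].
Proof. exact (reverses_iff_rev_star x y [] []). Qed.

Lemma rev_eq_refl x : rev_eq x x.
Proof. apply reverses_diag. Qed.

Lemma rev_eq_sym [x y] : rev_eq x y -> rev_eq y x.
Proof. apply reverses_sym. Qed.

Lemma rev_eq_cong [x y] : rev_eq x y -> x ≡ y.
Proof. intro H; apply reverses_cong in H. rewrite !app_nil_r in H. exact H. Qed.

Lemma rev_eq_ctx a b [x y] : rev_eq x y -> rev_eq (a ++ x ++ b) (a ++ y ++ b).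
Proof.
  intro H.
  apply (reverses_app_l (reverses_prefix a (y ++ b))).
  exact (reverses_app_l (reverses_app_r H (reverses_nil_l b)) (reverses_diag b)).
Qed.

Lemma rev_eq_rel [u v] : positive_presentation R -> R u v -> rev_eq u v.
Proof.
  intros Hpos H; destruct (Hpos _ _ H).
  apply reverses_rel; auto. left; rewrite !app_nil_r; exact H.
Qed.

Lemma rev_eq_app_split [u u2 v v2] :
  rev_eq (u ++ u2) (v ++ v2) ->
  exists a b w, reverses u v a b /\ rev_eq u2 (a ++ w) /\ rev_eq (b ++ w) v2.
Proof.
  intro H.
  apply reverses_split_l in H as (c & q & r & Hq & Hr & Hqr).
  symmetry in Hqr; apply app_eq_nil in Hqr as [-> ->].
  apply reverses_split_r in Hq as (b & a & w & H1 & H2 & ->).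
  exists a, b, w; repeat split; auto.
  exact (reverses_app_l H2 (reverses_diag w)).
Qed.

Lemma rev_eq_complete_witness [u v u' v'] :
  rev_eq (u ++ v') (v ++ u') ->
  exists u'' v'' w, rev_star R (inv u ++ pos v) (pos v'' ++ inv u'') /\
    u' ≡ u'' ++ w /\ v' ≡ v'' ++ w.
Proof.
  intro H; destruct (rev_eq_app_split H) as (a & b & w & H1 & H2 & H3).
  exists b, a, w; repeat split.
  - apply reverses_iff_rev_star, H1.
  - symmetry; apply rev_eq_cong, H3.
  - apply rev_eq_cong, H2.
Qed.

Lemma r_cube_of_strong u v w : strong_r_cube R u v w -> r_cube R u v w.
Proof.
  intros Hs u' v' H.
  apply rev_eq_complete_witness, rev_eq_iff_rev_star, (Hs u' v' H).
Qed.

Lemma r_cube_reverses [u v w v1 w1 w2 u2 v3 u3] :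
  r_cube R u v w -> reverses w v v1 w1 -> reverses u w w2 u2 -> reverses u2 v1 v3 u3 ->
  exists u'' v'' w'', reverses u v v'' u'' /\
    w1 ++ u3 ≡ u'' ++ w'' /\ w2 ++ v3 ≡ v'' ++ w''.
Proof.
  intros Hcube H1 H2 H3.
  destruct (Hcube (w1 ++ u3) (w2 ++ v3)) as (u'' & v'' & w'' & Huv & Hu & Hv).
  - apply rev_star_cube_iff. exists v1, w1, w2, u2, v3, u3; auto.
  - exists u'', v'', w''; repeat split; auto. apply reverses_iff_rev_star, Huv.
Qed.

Lemma rev_star_nil_of_complete [u v] :
  positive_presentation R -> r_complete R -> u ≡ v -> rev_star R (inv u ++ pos v) [].
Proof.
  intros Hpos Hc Huv.
  destruct (Hc u v [] []) as (u'' & v'' & w & H & Hu & Hv); [rewrite !app_nil_r; exact Huv |].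
  apply (cong_nil_iff Hpos) in Hu as [Hu _], Hv as [Hv _].
  destruct (app_eq_nil _ _ (Hu eq_refl)) as [-> _], (app_eq_nil _ _ (Hv eq_refl)) as [-> _].
  exact H.
Qed.

Lemma strong_r_cube_of_complete :
  positive_presentation R -> r_complete R -> forall u v w, strong_r_cube R u v w.
Proof.
  intros Hpos Hc u v w u' v' H.
  apply rev_star_cube_iff in H as (v1 & w1 & w2 & u2 & v3 & u3 & Hwv & Huw & Hm & -> & ->).
  apply (rev_star_nil_of_complete Hpos Hc).
  apply reverses_cong in Hwv, Huw, Hm.
  rewrite app_assoc, Huw, <- app_assoc, Hm, app_assoc, Hwv, <- app_assoc. reflexivity.
Qed.

Lemma rev_eq_of_cong_on (P : list S -> Prop) :
  positive_presentation R ->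
  (forall u v, u ≡ v -> P u -> P v) ->
  (forall x y z, P x -> rev_eq x y -> rev_eq y z -> rev_eq x z) ->
  forall a b, a ≡ b -> P a -> rev_eq a b.
Proof.
  intros Hpos HP trans_on a b Hab.
  induction Hab as [a0 b0 u v Huv | u | u v Huv IH | u v w Huv IHuv _ IHvw]; intro Ha.
  - apply rev_eq_ctx, rev_eq_rel; assumption.
  - apply rev_eq_refl.
  - apply rev_eq_sym, IH, (HP v); [symmetry |]; assumption.
  - apply (trans_on u v w Ha (IHuv Ha)), IHvw, (HP u); assumption.
Qed.

Section Homogeneous.
Context {O : Type} {lt : O -> O -> Prop} {lambda : list S -> O}.
Hypothesis lt_wf : well_founded lt.
Hypothesis lambda_cons : forall s u, lt (lambda u) (lambda (s :: u)).
Hypothesis lambda_cong : forall [u v], u ≡ v -> lambda u = lambda v.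
Hypothesis Hpos : positive_presentation R.
Hypothesis letter_cubes : forall s t r : S, r_cube R [s] [t] [r].

Lemma rev_eq_trans_cons s t r x y z :
  (forall a b, a ≡ b -> lt (lambda a) (lambda (s :: x)) -> rev_eq a b) ->
  rev_eq (s :: x) (t :: y) -> rev_eq (t :: y) (r :: z) -> rev_eq (s :: x) (r :: z).
Proof.
  intros below Hxy Hyz.
  assert (Ly : lambda (t :: y) = lambda (s :: x)) by apply eq_sym, lambda_cong, rev_eq_cong, Hxy.
  assert (Lz : lambda (r :: z) = lambda (s :: x))
    by (rewrite <- Ly; apply eq_sym, lambda_cong, rev_eq_cong, Hyz).
  destruct (rev_eq_app_split (u := [s]) (v := [t]) Hxy) as (p1 & m & p2 & Hst & Hx & Hy).
  destruct (rev_eq_app_split (u := [t]) (v := [r]) Hyz) as (q1 & n & q2 & Htr & Hy' & Hz).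
  apply rev_eq_cong in Hx, Hy, Hy', Hz.
  assert (Hmq : rev_eq (m ++ p2) (q1 ++ q2)).
  { apply below; [rewrite Hy; exact Hy' |].
    rewrite (lambda_cong Hy), <- Ly. apply lambda_cons. }
  destruct (rev_eq_app_split Hmq) as (v3 & u3 & k & Hm & Hp2 & Hq2).
  apply rev_eq_cong in Hp2, Hq2.
  destruct (r_cube_reverses (letter_cubes s r t) Htr Hst Hm)
    as (u'' & v'' & w'' & Hsr & Hu & Hv).
  assert (Cz : u'' ++ w'' ++ k ≡ z).
  { rewrite app_assoc, <- Hu, <- app_assoc, Hq2. exact Hz. }
  assert (Hz' : rev_eq (u'' ++ w'' ++ k) z).
  { apply below; [exact Cz |]. rewrite (lambda_cong Cz), <- Lz. apply lambda_cons. }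
  apply reverses_split_l in Hz' as (d & a & b & Hzd & Hd & Hab).
  symmetry in Hab; apply app_eq_nil in Hab as [-> ->].
  assert (Hx' : rev_eq x (v'' ++ d)).
  { apply below; [| apply lambda_cons].
    rewrite Hx, Hp2, app_assoc, Hv, <- app_assoc, (rev_eq_cong Hd). reflexivity. }
  exact (reverses_app_l (reverses_app_r Hsr Hzd) Hx').
Qed.

Lemma rev_eq_trans [x y z] : rev_eq x y -> rev_eq y z -> rev_eq x z.
Proof.
  revert y z.
  induction x as [x IH] using (well_founded_ind (wf_inverse_image _ _ lt lambda lt_wf)).
  intros y z Hxy Hyz.
  pose proof (cong_nil_iff Hpos (rev_eq_cong Hxy)) as Nxy.
  pose proof (cong_nil_iff Hpos (rev_eq_cong Hyz)) as Nyz.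
  destruct x as [|s x], y as [|t y], z as [|r z]; try (exfalso; intuition discriminate).
  - apply rev_eq_refl.
  - apply rev_eq_trans_cons with t y; auto.
    apply rev_eq_of_cong_on; [exact Hpos | |].
    + intros a b Hab. rewrite (lambda_cong Hab). auto.
    + intros a b c Ha. exact (IH a Ha b c).
Qed.

Lemma rev_eq_of_cong [x y] : x ≡ y -> rev_eq x y.
Proof.
  intro H; apply (rev_eq_of_cong_on (fun _ => True)); auto.
  intros x' y' z' _; apply rev_eq_trans.
Qed.

End Homogeneous.

Lemma complete_of_letter_cubes :
  positive_presentation R -> r_homogeneous R ->
  (forall s t r : S, r_cube R [s] [t] [r]) -> r_complete R.
Proof.
  intros Hpos (O & lt & lambda & _ & _ & lt_wf & lambda_cons & lambda_cong) Hcube u v u' v' H.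
  apply rev_eq_complete_witness.
  exact (rev_eq_of_cong lt_wf lambda_cons lambda_cong Hpos Hcube H).
Qed.

End Reversing.

Theorem proposition4p4 (S : Type) (R : list S -> list S -> Prop)
  (HS : inhabited S) (Hpos : positive_presentation R) (Hhom : r_homogeneous R) :
  (r_complete R <-> (forall u v w : list S, strong_r_cube R u v w)) /\
  ((forall u v w : list S, strong_r_cube R u v w) <->
     (forall s t r : S, strong_r_cube R [s] [t] [r])) /\
  ((forall s t r : S, strong_r_cube R [s] [t] [r]) <->
     (forall s t r : S, r_cube R [s] [t] [r])).
Proof.
  pose proof (strong_r_cube_of_complete Hpos) as strong_of_complete.
  pose proof (complete_of_letter_cubes Hpos Hhom) as complete_of_cubes.
  assert (cubes_of_strong : (forall s t r : S, strong_r_cube R [s] [t] [r]) ->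
                            forall s t r : S, r_cube R [s] [t] [r])
    by (intros H s t r; apply r_cube_of_strong, H).
  split; [|split]; split; intro H.
  - exact (strong_of_complete H).
  - apply complete_of_cubes, cubes_of_strong. intros s t r; apply H.
  - intros s t r; apply H.
  - apply strong_of_complete, complete_of_cubes, cubes_of_strong, H.
  - apply cubes_of_strong, H.
  - intros s t r; apply strong_of_complete, complete_of_cubes, H.
Qed.
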